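(* Let $n\ge p$. For $\mathcal X\in\mathrm{St}(n,p,l)$ and $\mathcal V\in T_{\mathcal X}\mathrm{St}(n,p,l)$ put $\mathcal P=\mathcal I-\frac12\mathcal X*\mathcal X^\top\in\mathbb R^{n\times n\times l}$ and $\mathcal W_{\mathcal V}=\mathcal P*\mathcal V*\mathcal X^\top-\mathcal X*\mathcal V^\top*\mathcal P$ (a skew-symmetric tensor in $\mathbb R^{n\times n\times l}$). Then $$R_{\mathcal X}(\mathcal V)=\Big(\mathcal I-\tfrac12\mathcal W_{\mathcal V}\Big)^{-1}*\Big(\mathcal I+\tfrac12\mathcal W_{\mathcal V}\Big)*\mathcal X$$ is well defined and is a retraction on $\mathrm{St}(n,p,l)$.
   Context: Frontal slices $A^{(i)}=\mathcal A(:,:,i)$. The t-product is $\mathcal A*\mathcal B=\operatorname{fold}(\operatorname{bcirc}(\mathcal A)\operatorname{unfold}(\mathcal B))$, where $\operatorname{bcirc}(\mathcal A)$ is the block circulant matrix with $(i,j)$ block $A^{(((i-j)\bmod l)+1)}$, $\operatorname{unfold}$ stacks frontal slices vertically, $\operatorname{fold}$ is its inverse. Transpose: $\mathcal A^\top$ has frontal slices $(A^{(1)})^\top,(A^{(l)})^\top,\dots,(A^{(2)})^\top$. $\mathcal I$ is the identity tensor (first frontal slice identity, others zero), and $\mathcal A^{-1}$ the t-product inverse. A tensor $\mathcal W$ is skew-symmetric if $\mathcal W^\top=-\mathcal W$. $\mathrm{St}(n,p,l)=\{\mathcal X\in\mathbb R^{n\times p\times l}:\mathcal X^\top*\mathcal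 X=\mathcal I\}$, an embedded submanifold of $\mathbb R^{n\times p\times l}$. A retraction on a manifold $M$ is a smooth map $R:TM\to M$ with $R_x(0_x)=x$ and $\mathrm DR_x(0_x)=\mathrm{id}_{T_xM}$. *)

From HB Require Import structures.
From mathcomp Require Import all_boot all_order all_algebra.
From mathcomp Require Import all_classical all_reals all_analysis.
From Stdlib Require Import ClassicalEpsilon.

Set Implicit Arguments.
Unset Strict Implicit.
Unset Printing Implicit Defensive.

Import Order.TTheory GRing.Theory Num.Theory.
Import numFieldNormedType.Exports.
Local Open Scope ring_scope.

(* Third-order tensors in R^{n x p x l}, represented by their l frontal
   slices (0-indexed): A k = A^{(k+1)}. *)
Definition tensor (R : Type) (n p l : nat) := 'I_l -> 'M[R]_(n, p).

Definition ord_sub l (i j : 'I_l) : 'I_l :=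
  Ordinal (ltn_pmod (i + (l - j)) (leq_ltn_trans (leq0n i) (ltn_ord i))).
Definition ord_neg l (i : 'I_l) : 'I_l :=
  Ordinal (ltn_pmod (l - i) (leq_ltn_trans (leq0n i) (ltn_ord i))).

Section TAlg.
Variable R : pzRingType.

(* t-product: fold (bcirc A * unfold B); the i-th block row of bcirc A is
   [A^{(i-j) mod l}]_j, so the i-th slice of the product is
   sum_j A_{(i-j) mod l} B_j. *)
Definition tprod n p q l (A : tensor R n p l) (B : tensor R p q l)
  : tensor R n q l := fun i => \sum_(j < l) A (ord_sub i j) *m B j.

Definition ttr n p l (A : tensor R n p l) : tensor R p n l :=
  fun i => (A (ord_neg i))^T.

Definition tid n l : tensor R n n l :=
  fun i => if val i == 0%N then 1%:M else 0.

Definition tadd n p l (A B : tensor R n p l) : tensor R n p l :=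
  fun i => A i + B i.
Definition tsub n p l (A B : tensor R n p l) : tensor R n p l :=
  fun i => A i - B i.
Definition tscale n p l (a : R) (A : tensor R n p l) : tensor R n p l :=
  fun i => a *: A i.
Definition tzero n p l : tensor R n p l := fun _ => 0.
End TAlg.

Arguments tid {R n l}.
Arguments tzero {R n p l}.

Section TAnal.
Variable R : realType.

Definition tinvertible n l (A : tensor R n n l) : Prop :=
  exists B : tensor R n n l, tprod A B = tid /\ tprod B A = tid.

Definition tinv n l (A : tensor R n n l) : tensor R n n l :=
  epsilon (inhabits A) (fun B => tprod A B = tid /\ tprod B A = tid).

Definition Stiefel n p l (X : tensor R n p l) : Prop := tprod (ttr X) X = tid.

Definition tcoord n p l (A : tensor R n p l) : 'M[R]_(l, n * p) :=
  \matrix_(k, j) mxvec (A k) 0 j.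
Definition tuncoord n p l (M : 'M[R]_(l, n * p)) : tensor R n p l :=
  fun k => vec_mx (row k M).

Definition tangent n p l (X V : tensor R n p l) : Prop :=
  exists g : R -> tensor R n p l,
    (forall t, Stiefel (g t)) /\ g 0 = X /\
    is_derive (0 : R) (1 : R) (fun t => tcoord (g t)) (tcoord V).

Fixpoint Ck (V W : normedModType R) (k : nat) (f : V -> W) : Prop :=
  match k with
  | 0%N => continuous f
  | k'.+1 => (forall x, differentiable f x) /\
             forall v : V, Ck k' (fun x => 'D_v f x)
  end.
Definition smooth (V W : normedModType R) (f : V -> W) : Prop :=
  forall k, Ck k f.

Definition Pten n p l (X : tensor R n p l) : tensor R n n l :=
  tsub tid (tscale (1/2) (tprod X (ttr X))).
Definition Wten n p l (X V : tensor R n p l) : tensor R n n l :=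
  tsub (tprod (tprod (Pten X) V) (ttr X))
       (tprod (tprod X (ttr V)) (Pten X)).
Definition Retr n p l (X V : tensor R n p l) : tensor R n p l :=
  tprod (tprod (tinv (tsub tid (tscale (1/2) (Wten X V))))
               (tadd tid (tscale (1/2) (Wten X V)))) X.

Definition Retr_coord n p l (M : 'M[R]_(l + l, n * p)) : 'M[R]_(l, n * p) :=
  tcoord (Retr (tuncoord (usubmx M)) (tuncoord (dsubmx M))).
End TAnal.

(* The block-circulant embedding [bcirc] is injective and turns the t-product,
   the transpose and the identity tensor into the matrix product, the transpose
   and the identity matrix, so everything reduces to matrices.  There W_V
   becomes the skew-symmetric matrix P V X^T - X V^T P; hence I - W/2 is
   invertible and the Cayley transform (I - W/2)^-1 (I + W/2) is orthogonal,
   which preserves X^T X = I.  The entries of R are rational functions of the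
   entries of (X, V) whose denominator det (I - W/2) never vanishes, so R is
   smooth.  Finally a tangent vector satisfies X^T V + V^T X = 0, which gives
   W_V X = V, and differentiating (I - tW/2) R_X(tV) = (I + tW/2) X at t = 0
   yields D R_X(0) V = W_V X = V. *)

From HB Require Import structures.
From mathcomp Require Import all_boot all_order all_algebra.
From mathcomp Require Import all_classical all_reals all_analysis.
From Stdlib Require Import ClassicalEpsilon.
Import Order.TTheory GRing.Theory Num.Theory.
Import numFieldNormedType.Exports.
Local Open Scope ring_scope.
Set Implicit Arguments.
Unset Strict Implicit.
Unset Printing Implicit Defensive.

(** * Block-circulant matrices *)

Lemma ord_subE l (i j : 'I_l.+1) : ord_sub i j = i - j.
Proof. by apply: val_inj; rewrite /= modnDmr. Qed.

Lemma ord_negE l (i : 'I_l.+1) : ord_neg i = - i.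
Proof. exact: val_inj. Qed.

Lemma ord_subr0 l (i j : 'I_l) : val j = 0%N -> ord_sub i j = i.
Proof.
by move=> j0; apply: val_inj; rewrite /= j0 subn0 modnDr modn_small.
Qed.

Section BlockCirculant.
Variable R : pzRingType.

Lemma tprodE n p q l (A : tensor R n p l) (B : tensor R p q l) i a b :
  tprod A B i a b = \sum_j \sum_c A (ord_sub i j) a c * B j c b.
Proof. by rewrite summxE; apply: eq_bigr => j _; rewrite mxE. Qed.

Definition bcirc n p l (A : tensor R n p l) :
    'M[R]_(\sum_(i < l) n, \sum_(i < l) p) :=
  @mxblock _ l l (fun=> n) (fun=> p) (fun i j => A (ord_sub i j)).

Lemma bcirc_inj n p l : injective (@bcirc n p l).
Proof.
rewrite /bcirc => A B /eq_mxblockP eqAB.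
apply: functional_extensionality_dep => i.
case: l A B i eqAB => [|l] A B i eqAB; first by case: i.
by have := eqAB i ord0; rewrite !ord_subr0.
Qed.

Lemma bcircM n p q l (A : tensor R n p l) (B : tensor R p q l) :
  bcirc (tprod A B) = bcirc A *m bcirc B.
Proof.
rewrite /bcirc mul_mxblock; apply: eq_mxblock => i k.
case: l A B i k => [|l] A B i k; first by case: i.
rewrite /tprod (reindex_inj (addIr (- k))) /=.
by apply: eq_bigr => j _; rewrite !ord_subE opprB addrA subrK.
Qed.

Lemma bcircT n p l (A : tensor R n p l) : bcirc (ttr A) = (bcirc A)^T.
Proof.
rewrite /bcirc tr_mxblock; apply: eq_mxblock => i j.
case: l A i j => [|l] A i j; first by case: i.
by rewrite /ttr ord_negE !ord_subE opprB.
Qed.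

Lemma bcirc1 n l : bcirc (@tid R n l) = 1%:M.
Proof.
rewrite -(mxdiagZ (p_ := fun=> n)) /bcirc /mxdiag.
apply/mxblockP => i j; rewrite !mxblockK /tid conform_mx_id.
case: l i j => [|l] i j; first by case: i.
by rewrite ord_subE -[val _ == 0%N]/((i - j)%R == 0%R) subr_eq0.
Qed.

Lemma bcircD n p l (A B : tensor R n p l) :
  bcirc (tadd A B) = bcirc A + bcirc B.
Proof. by rewrite /bcirc -mxblockD. Qed.

Lemma bcircB n p l (A B : tensor R n p l) :
  bcirc (tsub A B) = bcirc A - bcirc B.
Proof. by rewrite /bcirc -mxblockB. Qed.

Lemma bcircZ n p l a (A : tensor R n p l) : bcirc (tscale a A) = a *: bcirc A.
Proof. by apply/matrixP => i j; rewrite !mxE. Qed.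

Lemma bcirc0 n p l : bcirc (@tzero R n p l) = 0.
Proof. by rewrite /bcirc -mxblock0. Qed.

Lemma bcirc_mxE n p l (A : tensor R n p l) i j a b :
  bcirc A (tagnat.Rank i a) (tagnat.Rank j b) = A (ord_sub i j) a b.
Proof.
by rewrite /bcirc -(mxblockK (p_ := fun=> n) (q_ := fun=> p)
  (fun i j => A (ord_sub i j)) i j) /submxblock /mxsub mxE.
Qed.

End BlockCirculant.

Section CirculantInverse.
Variable R : comUnitRingType.

Lemma bcirc_rinv n l (A B : tensor R n n l) :
  bcirc A \in unitmx -> tprod A B = tid -> bcirc B = invmx (bcirc A).
Proof.
move=> uA /(congr1 (@bcirc _ n n l)); rewrite bcircM bcirc1 => AB1.
by rewrite -[bcirc B](mulKmx uA) AB1 mulmx1.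
Qed.

(* The inverse of an invertible block-circulant matrix is block-circulant:
   its first block column already determines a right t-inverse. *)
Lemma bcirc_invmx n l (A : tensor R n n l) :
  bcirc A \in unitmx -> exists B : tensor R n n l, bcirc B = invmx (bcirc A).
Proof.
move=> uA; case: l A uA => [|l] A uA.
  exists (@tzero _ n n 0); apply/matrixP => -[i i_lt0].
  by exfalso; move: i_lt0; rewrite big_ord0.
pose col0 (M : 'M[R]_(\sum_(i < l.+1) n)) k :=
  @submxblock _ _ _ (fun=> n) (fun=> n) M k ord0.
set N := invmx (bcirc A); exists (col0 N); apply: bcirc_rinv => //.
apply: functional_extensionality_dep => i.
have := congr1 (col0^~ i) (mulmxV uA); rewrite -/N /col0.
rewrite -[in X in submxblock (_ *m X)](submxblockK N) /bcirc mul_mxblock.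
rewrite mxblockK.
by rewrite -(bcirc1 R n l.+1) /bcirc mxblockK ord_subr0.
Qed.

End CirculantInverse.

Section TInverse.
Variable R : realType.

Lemma tinvE n l (A : tensor R n n l) :
  bcirc A \in unitmx -> bcirc (tinv A) = invmx (bcirc A).
Proof.
move=> uA; have [B BE] := bcirc_invmx uA.
have invB : tprod A B = tid /\ tprod B A = tid.
  by split; apply: bcirc_inj; rewrite bcircM bcirc1 BE ?mulmxV ?mulVmx.
have [tinvA _] := epsilon_spec (inhabits A)
  (fun B => tprod A B = tid /\ tprod B A = tid) (ex_intro _ B invB).
exact: bcirc_rinv.
Qed.

Lemma tinvertible_bcirc n l (A : tensor R n n l) :
  bcirc A \in unitmx -> tinvertible A.
Proof.
move=> uA; exists (tinv A).
by split; apply: bcirc_inj; rewrite bcircM bcirc1 tinvE ?mulmxV ?mulVmx.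
Qed.

End TInverse.

(** * The Cayley transform *)

Section Cayley.
Variable R : realFieldType.

(* If v (1 - c M) = 0 then v = c v M, and v M v^T = 0 by skewness,
   so v v^T = 0. *)
Lemma unitmx_1_sub_skew m (M : 'M[R]_m) (c : R) :
  M^T = - M -> 1%:M - c *: M \in unitmx.
Proof.
move=> skM; rewrite unitmxE unitfE; apply/negP => /det0P [v vN0 vM].
have v_eq : v = c *: (v *m M).
  by apply/eqP; rewrite -subr_eq0 scalemxAr -{1}(mulmx1 v) -mulmxBr vM.
have vMv0 : (v *m M *m v^T) 0 0 = 0.
  have : (v *m M *m v^T)^T = - (v *m M *m v^T).
    by rewrite !trmx_mul trmxK skM mulNmx mulmxN mulmxA.
  move/matrixP/(_ 0 0); rewrite mxE [RHS]mxE => /eqP.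
  by rewrite -addr_eq0 -mulr2n mulrn_eq0 => /eqP.
have : (v *m v^T) 0 0 = 0.
  by rewrite {1}v_eq -scalemxAl mxE vMv0 mulr0.
rewrite mxE => /eqP; rewrite psumr_eq0 => [vv0|k _]; last first.
  by rewrite mxE -expr2 sqr_ge0.
apply/negP: vN0; rewrite negbK; apply/eqP/matrixP => i j.
have := allP vv0 j (mem_index_enum _).
by rewrite ord1 !mxE -expr2 sqrf_eq0 => /eqP.
Qed.

Lemma cayley_orthogonal k m (W : 'M[R]_k) (X : 'M[R]_(k, m)) (c : R) :
  W^T = - W -> X^T *m X = 1%:M ->
  let Q := invmx (1%:M - c *: W) *m (1%:M + c *: W) *m X in
  Q^T *m Q = 1%:M.
Proof.
move=> skW XX /=.
set A := 1%:M - _; set B := 1%:M + _.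
have uA : A \in unitmx by exact: unitmx_1_sub_skew.
have AT : A^T = B.
  by rewrite /A /B linearB /= trmx1 linearZ /= skW scalerN opprK.
have uB : B \in unitmx by rewrite -AT unitmx_tr.
have AB : A *m B = B *m A.
  rewrite /A /B mulmxBl mulmxDl !mul1mx mulmxDr mulmxBr !mulmx1.
  by rewrite opprD addrA addrK addrA subrK.
have AiB : A *m invmx B = invmx B *m A.
  by rewrite -[LHS](mulKmx uB) (mulmxA B A) -AB mulmxK.
rewrite !trmx_mul -{1}AT trmxK trmx_inv AT !mulmxA -(mulmxA _ A) AiB.
rewrite mulmxA -(mulmxA _ A) mulmxV // mulmx1 -(mulmxA _ (invmx B)) mulVmx //.
by rewrite mulmx1.
Qed.

Definition Pmx k m (X : 'M[R]_(k, m)) : 'M[R]_k := 1%:M - (1/2) *: (X *m X^T).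

Definition Wmx k m (X V : 'M[R]_(k, m)) : 'M[R]_k :=
  Pmx X *m V *m X^T - X *m V^T *m Pmx X.

Lemma Pmx_sym k m (X : 'M[R]_(k, m)) : (Pmx X)^T = Pmx X.
Proof. by rewrite /Pmx linearB /= trmx1 linearZ /= trmx_mul trmxK. Qed.

Lemma Wmx_skew k m (X V : 'M[R]_(k, m)) : (Wmx X V)^T = - Wmx X V.
Proof. by rewrite /Wmx linearB /= !trmx_mul !trmxK Pmx_sym opprB !mulmxA. Qed.

Lemma WmxZ k m (X V : 'M[R]_(k, m)) t : Wmx X (t *: V) = t *: Wmx X V.
Proof.
have trZ : (t *: V)^T = t *: V^T by apply/matrixP => i j; rewrite !mxE.
by rewrite /Wmx trZ -!scalemxAr -!scalemxAl scalerBr.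
Qed.

Lemma Wmx_mulX k m (X V : 'M[R]_(k, m)) : X^T *m X = 1%:M ->
  V^T *m X + X^T *m V = 0 -> Wmx X V *m X = V.
Proof.
move=> XX VX0.
have VX : V^T *m X = - (X^T *m V) by apply/eqP; rewrite -addr_eq0 VX0.
have PX : Pmx X *m X = (1/2) *: X.
  rewrite /Pmx mulmxBl mul1mx -scalemxAl -mulmxA XX mulmx1.
  by rewrite -{1}(scale1r X) -scalerBl {1}(splitr 1) addrK.
rewrite /Wmx mulmxBl -(mulmxA (Pmx X *m V)) XX mulmx1 -(mulmxA (X *m V^T)) PX.
rewrite -scalemxAr -mulmxA VX /Pmx mulmxBl mul1mx -scalemxAl.
by rewrite mulmxN scalerN opprK mulmxA subrK.
Qed.

End Cayley.

Section RetractionAlgebra.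
Variable R : realType.

Lemma bcirc_Pten n p l (X : tensor R n p l) : bcirc (Pten X) = Pmx (bcirc X).
Proof. by rewrite /Pten bcircB bcirc1 bcircZ bcircM bcircT. Qed.

Lemma bcirc_Wten n p l (X V : tensor R n p l) :
  bcirc (Wten X V) = Wmx (bcirc X) (bcirc V).
Proof. by rewrite /Wten bcircB !bcircM !bcircT !bcirc_Pten. Qed.

Lemma unitmx_bcirc_cayley n p l (X V : tensor R n p l) (c : R) :
  bcirc (tsub tid (tscale c (Wten X V))) \in unitmx.
Proof.
by rewrite bcircB bcirc1 bcircZ bcirc_Wten unitmx_1_sub_skew ?Wmx_skew.
Qed.

Lemma tinvertible_cayley n p l (X V : tensor R n p l) :
  tinvertible (tsub tid (tscale (1/2) (Wten X V))).
Proof. exact/tinvertible_bcirc/unitmx_bcirc_cayley. Qed.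

Lemma bcirc_Retr n p l (X V : tensor R n p l) :
  bcirc (Retr X V) = invmx (1%:M - (1/2) *: Wmx (bcirc X) (bcirc V)) *m
     (1%:M + (1/2) *: Wmx (bcirc X) (bcirc V)) *m bcirc X.
Proof.
rewrite /Retr !bcircM tinvE ?unitmx_bcirc_cayley //.
by rewrite bcircB bcircD bcirc1 !bcircZ !bcirc_Wten.
Qed.

Lemma Stiefel_bcirc n p l (X : tensor R n p l) :
  Stiefel X <-> (bcirc X)^T *m bcirc X = 1%:M.
Proof.
rewrite /Stiefel -bcircT -bcircM -(bcirc1 R p l).
by split=> [-> // | /bcirc_inj].
Qed.

Lemma Stiefel_Retr n p l (X V : tensor R n p l) :
  Stiefel X -> Stiefel (Retr X V).
Proof.
by move=> /Stiefel_bcirc XX; apply/Stiefel_bcirc; rewrite bcirc_Retr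
  cayley_orthogonal ?Wmx_skew.
Qed.

Lemma Retr0 n p l (X : tensor R n p l) : Retr X tzero = X.
Proof.
apply: bcirc_inj; rewrite bcirc_Retr bcirc0.
have -> : Wmx (bcirc X) 0 = 0.
  by rewrite /Wmx trmx0 mulmx0 mul0mx mulmx0 mul0mx subr0.
by rewrite scaler0 subr0 addr0 invmx1 !mul1mx.
Qed.

Lemma Retr_scale_cayley n p l (X V : tensor R n p l) t :
  let W := tscale (1/2) (Wten X V) in
  tprod (tsub tid (tscale t W)) (Retr X (tscale t V)) =
  tprod (tadd tid (tscale t W)) X.
Proof.
apply: bcirc_inj; rewrite bcircM bcirc_Retr bcircM bcircB bcircD bcirc1.
rewrite !bcircZ bcirc_Wten !WmxZ !scalerA mulrC !mulmxA mulmxV ?mul1mx //.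
by rewrite unitmx_1_sub_skew ?Wmx_skew.
Qed.

Lemma Wten_mulX n p l (X V : tensor R n p l) : Stiefel X ->
  tadd (tprod (ttr V) X) (tprod (ttr X) V) = tzero -> tprod (Wten X V) X = V.
Proof.
move=> /Stiefel_bcirc XX /(congr1 (@bcirc _ _ _ _)).
rewrite bcircD !bcircM !bcircT bcirc0 => VX0.
by apply: bcirc_inj; rewrite bcircM bcirc_Wten Wmx_mulX.
Qed.

End RetractionAlgebra.

(** * Smoothness *)

Section CkClosure.
Variables (R : realType) (V : normedModType R).
Implicit Types (k : nat) (f g : V -> R).

Lemma eq_Ck (W : normedModType R) k (f g : V -> W) :
  (forall x, f x = g x) -> Ck k f -> Ck k g.
Proof. by move=> /funext ->. Qed.

Lemma CkW (W : normedModType R) k (f : V -> W) : Ck k.+1 f -> Ck k f.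
Proof.
elim: k f => [|k IHk] f /= [df Df]; last by split=> // v; apply: IHk.
by move=> x; apply: differentiable_continuous.
Qed.

Lemma Ck_cst (W : normedModType R) k (c : W) : Ck k (fun _ : V => c).
Proof.
elim: k c => [|k IHk] c /=; first by move=> x; apply: cst_continuous.
split=> [x|v]; first exact: differentiable_cst.
by apply: (eq_Ck (f := fun=> 0)) => [x|]; rewrite ?derive_cst.
Qed.

Lemma CkD (W : normedModType R) k (f g : V -> W) :
  Ck k f -> Ck k g -> Ck k (fun x => f x + g x).
Proof.
elim: k f g => [|k IHk] f g /=.
  by move=> cf cg x; exact: continuousD (cf x) (cg x).
move=> [df Df] [dg Dg]; split=> [x|v]; first exact: differentiableD.
apply: (eq_Ck (f := fun x => 'D_v f x + 'D_v g x)); last exact: IHk.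
by move=> x; rewrite (deriveD (diff_derivable (df x)) (diff_derivable (dg x))).
Qed.

Lemma CkN (W : normedModType R) k (f : V -> W) :
  Ck k f -> Ck k (fun x => - f x).
Proof.
elim: k f => [|k IHk] f /=; first by move=> cf x; exact: continuousN (cf x).
move=> [df Df]; split=> [x|v]; first exact: differentiableN.
apply: (eq_Ck (f := fun x => - 'D_v f x)); last exact: IHk.
by move=> x; rewrite (deriveN (diff_derivable (df x))).
Qed.

Lemma CkB (W : normedModType R) k (f g : V -> W) :
  Ck k f -> Ck k g -> Ck k (fun x => f x - g x).
Proof. by move=> cf cg; apply: CkD => //; apply: CkN. Qed.

Lemma CkZl (W : normedModType R) k g (w : W) :
  Ck k g -> Ck k (fun x => g x *: w).
Proof.
elim: k g => [|k IHk] g /=.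
  by move=> cg x; exact: continuousZr_tmp (cg x).
move=> [dg Dg]; split=> [x|v]; first exact: differentiableZl.
apply: (eq_Ck (f := fun x => 'D_v g x *: w)); last exact: IHk.
move=> x; rewrite [RHS]deriveE; last exact: differentiableZl.
by rewrite diffZl // -deriveE.
Qed.

Lemma CkM k f g : Ck k f -> Ck k g -> Ck k (fun x => f x * g x).
Proof.
elim: k f g => [|k IHk] f g /=.
  by move=> cf cg x; exact: continuousM (cf x) (cg x).
move=> [df Df] [dg Dg]; split=> [x|v]; first exact: differentiableM.
apply: (eq_Ck (f := fun x => f x * 'D_v g x + g x * 'D_v f x)).
  move=> x.
  by rewrite (deriveM (diff_derivable (df x)) (diff_derivable (dg x))).
by apply: CkD; apply: IHk => //; apply: CkW.
Qed.

Lemma CkV k f : (forall x, f x != 0) -> Ck k f -> Ck k (fun x => (f x)^-1).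
Proof.
move=> fN0; elim: k f fN0 => [|k IHk] f fN0 /=.
  by move=> cf x; exact: continuousV (fN0 x) (cf x).
move=> [df Df]; split=> [x|v]; first exact: differentiableV.
apply: (eq_Ck (f := fun x => - ((f x)^-1 * (f x)^-1) * 'D_v f x)).
  by move=> x; rewrite (deriveV (fN0 x) (diff_derivable (df x))) -exprVn expr2.
have cf : Ck k f by apply: CkW.
by apply: CkM => //; apply: CkN; apply: CkM; apply: IHk.
Qed.

Lemma Ck_sum (W : normedModType R) k (I : Type) (r : seq I) (P : pred I)
    (F : I -> V -> W) :
  (forall i, P i -> Ck k (F i)) -> Ck k (fun x => \sum_(i <- r | P i) F i x).
Proof.
move=> cF; elim: r => [|a r IHr].
  apply: (eq_Ck (f := fun=> 0)) => [x|]; last exact: Ck_cst.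
  by rewrite big_nil.
apply: (eq_Ck (f := fun x => (if P a then F a x else 0) +
                             \sum_(i <- r | P i) F i x)).
  by move=> x; rewrite big_cons; case: ifP => // _; rewrite add0r.
by apply: CkD => //; case Pa: (P a); [exact: cF | exact: Ck_cst].
Qed.

Lemma Ck_prod k (I : Type) (r : seq I) (P : pred I) (F : I -> V -> R) :
  (forall i, P i -> Ck k (F i)) -> Ck k (fun x => \prod_(i <- r | P i) F i x).
Proof.
move=> cF; elim: r => [|a r IHr].
  apply: (eq_Ck (f := fun=> (1 : R))) => [x|]; last exact: Ck_cst.
  by rewrite big_nil.
apply: (eq_Ck (f := fun x => (if P a then F a x else 1) *
                             \prod_(i <- r | P i) F i x)).
  by move=> x; rewrite big_cons; case: ifP => // _; rewrite mul1r.
by apply: CkM => //; case Pa: (P a); [exact: cF | exact: Ck_cst].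
Qed.

End CkClosure.

Section CkCoordinates.
Context {R : realType}.

Lemma Ck_entrywise (V : normedModType R) k m n (f : V -> 'M[R]_(m, n)) :
  (forall i j, Ck k (fun x => f x i j)) -> Ck k f.
Proof.
move=> cf; apply: (eq_Ck (f := fun x => \sum_i \sum_j f x i j *: delta_mx i j)).
  by move=> x; rewrite [RHS]matrix_sum_delta.
by apply: Ck_sum => i _; apply: Ck_sum => j _; apply: CkZl.
Qed.

Lemma Ck_const_derive (V W : normedModType R) k (f : V -> W) :
  continuous f -> (forall x, differentiable f x) ->
  (forall v, exists c, forall x, 'D_v f x = c) -> Ck k f.
Proof.
case: k => [|k] cf df Dc //=; split=> // v.
have [c Dfc] := Dc v.
by apply: (eq_Ck (f := fun=> c)) => [x|]; [rewrite Dfc | exact: Ck_cst].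
Qed.

Lemma Ck_mxcoord k m n (i : 'I_m) (j : 'I_n) :
  Ck k (fun M : 'M[R]_(m, n) => M i j).
Proof.
apply: Ck_const_derive => [|M|v]; first exact: coord_continuous.
  exact: differentiable_coord.
exists (v i j) => M; have := derive_mx (@derivable_id R _ M v).
by rewrite derive_id => /matrixP /(_ i j); rewrite mxE.
Qed.

Lemma Ck_id k : Ck k (fun t : R => t).
Proof.
apply: Ck_const_derive => [t //|t|v]; last by exists v => t; rewrite derive_id.
exact/derivable1_diffP/derivable_id.
Qed.

End CkCoordinates.

Section TensorCk.
Variables (R : realType) (V : normedModType R) (k : nat).

Definition Ck_entries m n (Q : V -> 'M[R]_(m, n)) :=
  forall a b, Ck k (fun x => Q x a b).

Definition Ck_slices n p l (F : V -> tensor R n p l) :=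
  forall i, Ck_entries (fun x => F x i).

Lemma Ck_det m (Q : V -> 'M[R]_m) : Ck_entries Q -> Ck k (fun x => \det (Q x)).
Proof.
move=> cQ; apply: Ck_sum => s _; apply: CkM; first exact: Ck_cst.
by apply: Ck_prod => i _; apply: cQ.
Qed.

(* Cramer's rule: the entries of the inverse are cofactors over the
   (nowhere vanishing) determinant. *)
Lemma Ck_entries_invmx m (Q : V -> 'M[R]_m) :
  Ck_entries Q -> (forall x, Q x \in unitmx) ->
  Ck_entries (fun x => invmx (Q x)).
Proof.
move=> cQ uQ a b; apply: (eq_Ck (f := fun x => (\det (Q x))^-1 *
   ((-1) ^+ (b + a) * \det (row' b (col' a (Q x)))))).
  by move=> x; rewrite /invmx uQ !mxE.
apply: CkM.
  by apply: CkV; [move=> x; rewrite -unitfE -unitmxE | exact: Ck_det].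
apply: CkM; first exact: Ck_cst.
apply: Ck_det => c d; apply: (eq_Ck _ (cQ (lift b c) (lift a d))) => x.
by rewrite !mxE.
Qed.

Lemma Ck_slices_cst n p l (A : tensor R n p l) : Ck_slices (fun=> A).
Proof. by move=> i a b; apply: Ck_cst. Qed.

Lemma Ck_slices_tprod n p q l (F : V -> tensor R n p l)
    (G : V -> tensor R p q l) :
  Ck_slices F -> Ck_slices G -> Ck_slices (fun x => tprod (F x) (G x)).
Proof.
move=> cF cG i a b; apply: (eq_Ck (f := fun x =>
  \sum_j \sum_c F x (ord_sub i j) a c * G x j c b)) => [x|].
  by rewrite tprodE.
apply: Ck_sum => j _; apply: Ck_sum => c _.
by apply: CkM; [apply: cF | apply: cG].
Qed.

Lemma Ck_slices_ttr n p l (F : V -> tensor R n p l) :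
  Ck_slices F -> Ck_slices (fun x => ttr (F x)).
Proof.
move=> cF i a b; apply: (eq_Ck _ (cF (ord_neg i) b a)) => x.
by rewrite /ttr mxE.
Qed.

Lemma Ck_slices_tadd n p l (F G : V -> tensor R n p l) :
  Ck_slices F -> Ck_slices G -> Ck_slices (fun x => tadd (F x) (G x)).
Proof.
move=> cF cG i a b; apply: (eq_Ck _ (CkD (cF i a b) (cG i a b))) => x.
by rewrite /tadd mxE.
Qed.

Lemma Ck_slices_tsub n p l (F G : V -> tensor R n p l) :
  Ck_slices F -> Ck_slices G -> Ck_slices (fun x => tsub (F x) (G x)).
Proof.
move=> cF cG i a b; apply: (eq_Ck _ (CkB (cF i a b) (cG i a b))) => x.
by rewrite /tsub !mxE.
Qed.

Lemma Ck_slices_tscale n p l (g : V -> R) (F : V -> tensor R n p l) :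
  Ck k g -> Ck_slices F -> Ck_slices (fun x => tscale (g x) (F x)).
Proof.
move=> cg cF i a b; apply: (eq_Ck _ (CkM cg (cF i a b))) => x.
by rewrite /tscale mxE.
Qed.

Lemma Ck_entries_bcirc n p l (F : V -> tensor R n p l) :
  Ck_slices F -> Ck_entries (fun x => bcirc (F x)).
Proof.
move=> cF s t; apply: (eq_Ck _ (cF (ord_sub (tagnat.sig1 s) (tagnat.sig1 t))
  (tagnat.sig2 s) (tagnat.sig2 t))) => x.
by rewrite mxE.
Qed.

Lemma Ck_slices_tinv n l (F : V -> tensor R n n l) :
  (forall x, bcirc (F x) \in unitmx) -> Ck_slices F ->
  Ck_slices (fun x => tinv (F x)).
Proof.
case: l F => [|l] F uF cF i a b; first by case: i.
have cinv := Ck_entries_invmx (Ck_entries_bcirc cF) uF.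
apply: (eq_Ck _ (cinv (tagnat.Rank i a) (tagnat.Rank ord0 b))) => x.
by rewrite -tinvE // bcirc_mxE ord_subr0.
Qed.

Lemma Ck_slices_Retr n p l (FX FV : V -> tensor R n p l) :
  Ck_slices FX -> Ck_slices FV -> Ck_slices (fun x => Retr (FX x) (FV x)).
Proof.
move=> cX cV.
have cP : Ck_slices (fun x => Pten (FX x)).
  apply: Ck_slices_tsub; first exact: Ck_slices_cst.
  apply: Ck_slices_tscale; first exact: Ck_cst.
  by apply: Ck_slices_tprod => //; apply: Ck_slices_ttr.
have cW : Ck_slices (fun x => Wten (FX x) (FV x)).
  by apply: Ck_slices_tsub; do 2?apply: Ck_slices_tprod => //;
    apply: Ck_slices_ttr.
have cWh : Ck_slices (fun x => tscale (1/2) (Wten (FX x) (FV x))).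
  by apply: Ck_slices_tscale => //; apply: Ck_cst.
apply: Ck_slices_tprod => //; apply: Ck_slices_tprod.
  apply: Ck_slices_tinv => [x|]; first exact: unitmx_bcirc_cayley.
  by apply: Ck_slices_tsub => //; apply: Ck_slices_cst.
by apply: Ck_slices_tadd => //; apply: Ck_slices_cst.
Qed.

End TensorCk.

Lemma smooth_Retr_coord (R : realType) n p l : smooth (@Retr_coord R n p l).
Proof.
move=> k.
have cX : Ck_slices k (fun M : 'M[R]_(l + l, n * p) =>
                         tuncoord (usubmx M) : tensor R n p l).
  move=> i a b; apply: (eq_Ck _ (Ck_mxcoord _ (lshift l i) (mxvec_index a b))).
  by move=> M; rewrite !mxE.
have cV : Ck_slices k (fun M : 'M[R]_(l + l, n * p) =>
                         tuncoord (dsubmx M) : tensor R n p l).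
  move=> i a b; apply: (eq_Ck _ (Ck_mxcoord _ (rshift l i) (mxvec_index a b))).
  by move=> M; rewrite !mxE.
apply: Ck_entrywise => i j; case/mxvec_indexP: j => a b.
apply: (eq_Ck _ (Ck_slices_Retr cX cV i a b)) => M.
by rewrite /Retr_coord /tcoord mxE mxvecE.
Qed.

(** * Derivatives *)

Section MatrixDerive.
Variables (R : realFieldType) (V : normedModType R).

Lemma eq_is_derive (W : normedModType R) (f g : V -> W) x v df :
  (forall y, f y = g y) -> is_derive x v f df -> is_derive x v g df.
Proof. by move=> /funext ->. Qed.

Lemma is_derive_mxP m n (M : V -> 'M[R]_(m, n)) x v dM :
  is_derive x v M dM <-> forall i j, is_derive x v (fun y => M y i j) (dM i j).
Proof.
split=> [[dM_ex <-] i j | DM].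
  apply: DeriveDef; first by move/derivable_mxP: dM_ex; apply.
  by rewrite derive_mx // mxE.
have dM_ex : derivable M x v by apply/derivable_mxP => i j; case: (DM i j).
apply: DeriveDef => //; rewrite derive_mx //.
by apply/matrixP => i j; rewrite mxE; case: (DM i j).
Qed.

End MatrixDerive.

Section TensorDerive.
Variables (R : realType) (V : normedModType R).
Implicit Types (x v : V) (n p q l : nat).

Definition is_tderive n p l x v (F : V -> tensor R n p l)
    (dF : tensor R n p l) :=
  forall i a b, is_derive x v (fun y => F y i a b) (dF i a b).

Lemma is_tderive_tcoord n p l x v (F : V -> tensor R n p l) dF :
  is_derive x v (fun y => tcoord (F y)) (tcoord dF) <-> is_tderive x v F dF.
Proof.
rewrite is_derive_mxP; split=> [DF i a b | DF i].
  have := DF i (mxvec_index a b); rewrite mxE mxvecE.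
  by apply: eq_is_derive => y; rewrite mxE mxvecE.
case/mxvec_indexP=> a b; rewrite mxE mxvecE.
by apply: eq_is_derive (DF i a b) => y; rewrite mxE mxvecE.
Qed.

Lemma is_tderive_unique n p l x v (F : V -> tensor R n p l) dF1 dF2 :
  is_tderive x v F dF1 -> is_tderive x v F dF2 -> dF1 = dF2.
Proof.
move=> DF1 DF2; apply: functional_extensionality_dep => i; apply/matrixP => a b.
by case: (DF1 i a b) => _ <-; case: (DF2 i a b).
Qed.

Lemma is_tderive_cst n p l x v (A : tensor R n p l) :
  is_tderive x v (fun=> A) tzero.
Proof.
move=> i a b; apply: (is_derive_eq (is_derive_cst (A i a b) x v)).
by rewrite mxE.
Qed.

Lemma is_tderiveD n p l x v (F G : V -> tensor R n p l) dF dG :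
  is_tderive x v F dF -> is_tderive x v G dG ->
  is_tderive x v (fun y => tadd (F y) (G y)) (tadd dF dG).
Proof.
move=> DF DG i a b; rewrite /tadd mxE.
by apply: eq_is_derive (is_deriveD (DF i a b) (DG i a b)) => y; rewrite mxE.
Qed.

Lemma is_tderiveB n p l x v (F G : V -> tensor R n p l) dF dG :
  is_tderive x v F dF -> is_tderive x v G dG ->
  is_tderive x v (fun y => tsub (F y) (G y)) (tsub dF dG).
Proof.
move=> DF DG i a b; rewrite /tsub !mxE.
by apply: eq_is_derive (is_deriveB (DF i a b) (DG i a b)) => y; rewrite !mxE.
Qed.

Lemma is_tderiveZl n p l x v (g : V -> R) dg (A : tensor R n p l) :
  is_derive x v g dg -> is_tderive x v (fun y => tscale (g y) A) (tscale dg A).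
Proof.
move=> Dg i a b; rewrite /tscale mxE mulrC.
by apply: eq_is_derive (is_deriveZ (A i a b) Dg) => y; rewrite mxE mulrC.
Qed.

Lemma is_tderive_ttr n p l x v (F : V -> tensor R n p l) dF :
  is_tderive x v F dF -> is_tderive x v (fun y => ttr (F y)) (ttr dF).
Proof.
move=> DF i a b; rewrite /ttr mxE.
by apply: eq_is_derive (DF (ord_neg i) b a) => y; rewrite mxE.
Qed.

Lemma is_tderive_tprod n p q l x v (F : V -> tensor R n p l)
    (G : V -> tensor R p q l) dF dG :
  is_tderive x v F dF -> is_tderive x v G dG ->
  is_tderive x v (fun y => tprod (F y) (G y))
                 (tadd (tprod dF (G x)) (tprod (F x) dG)).
Proof.
move=> DF DG i a b.
have D := is_derive_sum (fun j => is_derive_sum (fun c =>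
  is_deriveM (DF (ord_sub i j) a c) (DG j c b))).
have value_eq : tadd (tprod dF (G x)) (tprod (F x) dG) i a b =
    \sum_j \sum_c (F x (ord_sub i j) a c *: dG j c b +
                   G x j c b *: dF (ord_sub i j) a c).
  rewrite /tadd mxE !tprodE -big_split; apply: eq_bigr => j _.
  rewrite -big_split; apply: eq_bigr => c _.
  by rewrite /= addrC [dF _ _ _ * _]mulrC.
rewrite value_eq; apply: eq_is_derive D => y.
by rewrite tprodE !fct_sumE; apply: eq_bigr => j _; rewrite fct_sumE.
Qed.

Lemma Ck_slices_tderivable n p l (F : V -> tensor R n p l) x v :
  Ck_slices 1 F -> exists dF, is_tderive x v F dF.
Proof.
move=> cF; exists (fun i => \matrix_(a, b) 'D_v (fun y => F y i a b) x).
move=> i a b.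
by rewrite mxE; apply/derivableP/diff_derivable; case: (cF i a b).
Qed.

End TensorDerive.

Section RetractionDerivative.
Variable R : realType.

Lemma tangent_skew n p l (X V : tensor R n p l) : tangent X V ->
  tadd (tprod (ttr V) X) (tprod (ttr X) V) = tzero.
Proof.
move=> [g [Sg [<- /is_tderive_tcoord Dg]]].
have := is_tderive_tprod (is_tderive_ttr Dg) Dg.
rewrite (funext Sg : (fun t => tprod (ttr (g t)) (g t)) = fun=> tid).
by move/is_tderive_unique; apply; apply: is_tderive_cst.
Qed.

(* Differentiating [Retr_scale_cayley] at t = 0 avoids differentiating the
   t-inverse: -(W/2) X + R'(0) = (W/2) X. *)
Lemma is_tderive_Retr_scale n p l (X V : tensor R n p l) :
  is_tderive (0 : R) 1 (fun t => Retr X (tscale t V)) (tprod (Wten X V) X).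
Proof.
pose F t := Retr X (tscale t V).
have [dF DF] : exists dF, is_tderive (0 : R) 1 F dF.
  apply: Ck_slices_tderivable; apply: Ck_slices_Retr.
    exact: Ck_slices_cst.
  by apply: Ck_slices_tscale; [exact: Ck_id | exact: Ck_slices_cst].
have F0 : F 0 = X.
  rewrite /F; have -> : tscale 0 V = tzero.
    by apply: functional_extensionality_dep => i; rewrite /tscale scale0r.
  exact: Retr0.
set W := tscale (1/2) (Wten X V).
have DW := is_tderiveZl W (is_derive_id (0 : R) 1).
have DL := is_tderive_tprod (is_tderiveB (is_tderive_cst (0 : R) 1 tid) DW) DF.
have DR := is_tderive_tprod (is_tderiveD (is_tderive_cst (0 : R) 1 tid) DW)
  (is_tderive_cst (0 : R) 1 X).
rewrite (funext (Retr_scale_cayley X V)) in DL.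
suff <- : dF = tprod (Wten X V) X by [].
have := is_tderive_unique DL DR; rewrite F0 => /(congr1 (@bcirc _ _ _ _)).
rewrite !bcircD !bcircM !bcircB !bcircD !bcircZ bcirc1 !bcirc0.
rewrite scale1r scale0r sub0r add0r subr0 addr0 mul1mx mulmx0 addr0 mulNmx.
move=> /eqP; rewrite addrC subr_eq -mulmxDl -scalerDl -splitr scale1r -bcircM.
by move=> /eqP /bcirc_inj.
Qed.

Lemma is_derive_Retr_scale n p l (X V : tensor R n p l) :
  Stiefel X -> tangent X V ->
  is_derive (0 : R) 1 (fun t => tcoord (Retr X (tscale t V))) (tcoord V).
Proof.
move=> sX tV; apply/is_tderive_tcoord.
by have := is_tderive_Retr_scale X V; rewrite Wten_mulX ?tangent_skew.
Qed.

End RetractionDerivative.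

Theorem mainTheorem7 (R : realType) (n p l : nat) (hnp : (p <= n)%N) :
  (* well defined: I - W_V/2 is t-invertible *)
  (forall X V : tensor R n p l, Stiefel X -> tangent X V ->
     tinvertible (tsub tid (tscale (1/2) (Wten X V)))) /\
  (* R maps TM into M *)
  (forall X V : tensor R n p l, Stiefel X -> tangent X V ->
     Stiefel (Retr X V)) /\
  (* smoothness: R is the restriction to TM of a smooth map on the ambient
     space of pairs (X, V) *)
  smooth (@Retr_coord R n p l) /\
  (* R_X(0_X) = X *)
  (forall X : tensor R n p l, Stiefel X -> Retr X tzero = X) /\
  (* D R_X(0_X) = id on T_X St *)
  (forall X V : tensor R n p l, Stiefel X -> tangent X V ->
     is_derive (0 : R) (1 : R) (fun t => tcoord (Retr X (tscale t V)))
               (tcoord V)).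
Proof.
(* [hnp] only makes St(n,p,l) nonempty; none of the five claims needs it. *)
split; first by move=> X V _ _; apply: tinvertible_cayley.
split; first by move=> X V sX _; apply: Stiefel_Retr.
split; first exact: smooth_Retr_coord.
split; first by move=> X _; apply: Retr0.
exact: is_derive_Retr_scale.
Qed.
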